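(* Let $\epsilon\in(0,1)$, $u_0\in\mathbb{R}\setminus\{0,1,-1\}$, and let $h^*=\frac{8\epsilon^2}{u_0^2+4|u_0|+3}$ if $|u_0|>1$ and $h^*=\epsilon^2$ if $0<|u_0|<1$. For every $h\in(0,h^*]$, any real sequence $(u_n)_{n\ge0}$ starting at $u_0$ and satisfying the implicit midpoint scheme $$\frac{u_n-u_{n-1}}{h}+\frac{1}{\epsilon^2}f\!\left(\frac{u_n+u_{n-1}}{2}\right)=0,\qquad n\ge1,\quad f(u)=u^3-u,$$ satisfies $E(u_n)\le E(u_{n-1})$ for all $n\ge1$, where $E(v)=\frac{1}{4\epsilon^2}(v^2-1)^2$.
   Context: The scheme discretizes the ODE $u'(t)+\frac{1}{\epsilon^2}(u^3-u)=0$, $u(0)=u_0$. For $h\le2\epsilon^2$ each step equation has a unique real solution. *)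

From Stdlib Require Import Reals Lra.
Open Scope R_scope.

Definition f (u : R) : R := u ^ 3 - u.

Definition E (eps v : R) : R := (v ^ 2 - 1) ^ 2 / (4 * eps ^ 2).

Definition hstar (eps u0 : R) : R :=
  if Rlt_dec 1 (Rabs u0) then 8 * eps ^ 2 / (u0 ^ 2 + 4 * Rabs u0 + 3)
  else eps ^ 2.

Definition midpoint_step (eps h uprev unext : R) : Prop :=
  (unext - uprev) / h + / eps ^ 2 * f ((unext + uprev) / 2) = 0.

(* The scheme moves from a to b with b - a = -k f(m), where k = h/eps^2 and
   m = (a+b)/2.  Expanding around the midpoint, the energy difference factors as
   k m^2 (m^2-1)^2 (k^2 m^2 (1-m^2) - 4) (up to the positive factor 1/(4 eps^2)),
   and since m^2 (1-m^2) <= 1/4 it is nonpositive as soon as k <= 4. *)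

From Stdlib Require Import Reals Lra Psatz.
Open Scope R_scope.

Lemma hstar_le_sqr (eps u0 : R) : 0 < eps -> hstar eps u0 <= eps ^ 2.
Proof.
  intros Heps. unfold hstar.
  destruct (Rlt_dec 1 (Rabs u0)) as [Hu0 | _]; [| lra].
  assert (Heps2 : 0 < eps ^ 2) by (apply pow_lt; lra).
  assert (Hden : 8 < u0 ^ 2 + 4 * Rabs u0 + 3).
  { rewrite <- (pow2_abs u0). nra. }
  apply Rmult_le_reg_r with (u0 ^ 2 + 4 * Rabs u0 + 3); [lra |].
  unfold Rdiv. rewrite Rmult_assoc, Rinv_l by lra. nra.
Qed.

Lemma sqr_mul_one_sub_sqr_le (m : R) : m ^ 2 * (1 - m ^ 2) <= 1 / 4.
Proof. pose proof (pow2_ge_0 (m ^ 2 - 1 / 2)). nra. Qed.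

Lemma midpoint_energy_gap (k m : R) :
  let a := m + k * f m / 2 in
  let b := m - k * f m / 2 in
  (b ^ 2 - 1) ^ 2 - (a ^ 2 - 1) ^ 2
  = k * m ^ 2 * (m ^ 2 - 1) ^ 2 * (k ^ 2 * (m ^ 2 * (1 - m ^ 2)) - 4).
Proof. unfold f; simpl; field. Qed.

Lemma midpoint_energy_gap_nonpos (k m : R) : 0 <= k <= 4 ->
  k * m ^ 2 * (m ^ 2 - 1) ^ 2 * (k ^ 2 * (m ^ 2 * (1 - m ^ 2)) - 4) <= 0.
Proof.
  intros Hk.
  pose proof (sqr_mul_one_sub_sqr_le m) as Hm.
  assert (Hfactor : k ^ 2 * (m ^ 2 * (1 - m ^ 2)) <= 4).
  { destruct (Rle_dec 0 (m ^ 2 * (1 - m ^ 2))); nra. }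
  assert (Hweight : 0 <= k * m ^ 2 * (m ^ 2 - 1) ^ 2).
  { apply Rmult_le_pos; [apply Rmult_le_pos; [lra | apply pow2_ge_0] | apply pow2_ge_0]. }
  nra.
Qed.

Lemma midpoint_step_increment (eps h a b : R) : eps <> 0 -> h <> 0 ->
  midpoint_step eps h a b -> b - a = - (h / eps ^ 2) * f ((b + a) / 2).
Proof.
  unfold midpoint_step. intros Heps Hh Hstep.
  replace (b - a) with (h * ((b - a) / h)) by (field; lra).
  replace ((b - a) / h) with (- (/ eps ^ 2 * f ((b + a) / 2))) by lra.
  unfold Rdiv. ring.
Qed.

Lemma midpoint_step_energy_le (eps h a b : R) : 0 < eps -> 0 < h <= 4 * eps ^ 2 ->
  midpoint_step eps h a b -> E eps b <= E eps a.
Proof.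
  intros Heps Hh Hstep.
  assert (Heps2 : 0 < eps ^ 2) by (apply pow_lt; lra).
  set (k := h / eps ^ 2).
  assert (Hk : 0 <= k <= 4).
  { unfold k. split.
    - apply Rlt_le, Rdiv_lt_0_compat; lra.
    - apply Rmult_le_reg_r with (eps ^ 2); [lra |].
      unfold Rdiv. rewrite Rmult_assoc, Rinv_l by lra. lra. }
  set (m := (b + a) / 2).
  assert (Hd : b - a = - k * f m) by (apply midpoint_step_increment; [lra | lra | exact Hstep]).
  assert (Hm : m = (b + a) / 2) by reflexivity.
  assert (Ha : a = m + k * f m / 2) by lra.
  assert (Hb : b = m - k * f m / 2) by lra.
  unfold E, Rdiv. apply Rmult_le_compat_r.
  { apply Rlt_le, Rinv_0_lt_compat. lra. }
  apply Rminus_le. rewrite Ha, Hb at 1.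
  rewrite (midpoint_energy_gap k m).
  now apply midpoint_energy_gap_nonpos.
Qed.

Theorem theorem3p8 (eps u0 h : R) (u : nat -> R) :
  0 < eps < 1 ->
  u0 <> 0 -> u0 <> 1 -> u0 <> -1 ->
  0 < h <= hstar eps u0 ->
  u 0%nat = u0 ->
  (forall n : nat, (1 <= n)%nat -> midpoint_step eps h (u (n - 1)%nat) (u n)) ->
  forall n : nat, (1 <= n)%nat -> E eps (u n) <= E eps (u (n - 1)%nat).
Proof.
  intros Heps _ _ _ Hh _ Hstep n Hn.
  pose proof (hstar_le_sqr eps u0 (proj1 Heps)) as Hhstar.
  assert (Heps2 : 0 < eps ^ 2) by (apply pow_lt; lra).
  apply (midpoint_step_energy_le eps h); [lra | lra | now apply Hstep].
Qed.
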